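(* Let $x\cdot y$ be a PA-structure on $(\mathfrak{g},\mathfrak{n})$, where $\mathfrak{g}$ is abelian and $\mathfrak{n}$ is $2$-step nilpotent. Then $x\circ y=\frac12(x\cdot y+y\cdot x)$ defines a CPA-structure on $\mathfrak{n}$ if and only if $\{\mathfrak{n},\mathfrak{n}\}\cdot\mathfrak{n}=0$, i.e. $\{u,v\}\cdot w=0$ for all $u,v,w\in V$.
   Context: Let $K$ be a field of characteristic zero and $V$ a finite-dimensional vector space over $K$. Let $\mathfrak{g}=(V,[\,,])$ and $\mathfrak{n}=(V,\{\,,\})$ be two Lie algebra structures on $V$. A post-Lie algebra structure (PA-structure) on the pair $(\mathfrak{g},\mathfrak{n})$ is a $K$-bilinear product $x\cdot y$ on $V$ satisfying, for all $x,y,z\in V$: (i) $x\cdot y-y\cdot x=[x,y]-\{x,y\}$; (ii) $[x,y]\cdot z=x\cdot(y\cdot z)-y\cdot(x\cdot z)$; (iii) $x\cdot\{y,z\}=\{x\cdot y,z\}+\{y,x\cdot z\}$. A commutative post-Lie algebra structure (CPA-structure) on the Lie algebra $\mathfrak{n}=(V,\{\,,\})$ is a bilinear product $x\circ y$ on $V$ with $x\circ y=y\circ x$, $\{x,y\}\circ z=x\circ(y\circ z)-y\circ(x\circ z)$, and $x\circ\{y,z\}=\{x\circ y,z\}+\{y,x\circ z\}$ for all $x,y,z$. A Lie algebra is called $2$-step nilpotent here if it is nilpotent of class at most $2$. *)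

From HB Require Import structures.
From mathcomp Require Import all_boot all_order all_algebra.
Set Implicit Arguments. Unset Strict Implicit. Unset Printing Implicit Defensive.
Import GRing.Theory.
Local Open Scope ring_scope.

Section Defs.
Variables (K : fieldType) (V : vectType K).

Definition bilinear_prod (p : V -> V -> V) : Prop :=
  (forall (a : K) (x y z : V), p (a *: x + y) z = a *: p x z + p y z) /\
  (forall (a : K) (x y z : V), p x (a *: y + z) = a *: p x y + p x z).

Definition is_Lie (br : V -> V -> V) : Prop :=
  [/\ bilinear_prod br,
      (forall x, br x x = 0) &
      (forall x y z, br x (br y z) + br y (br z x) + br z (br x y) = 0)].

Definition is_abelian (br : V -> V -> V) : Prop := forall x y, br x y = 0.

Definition is_2step_nilpotent (br : V -> V -> V) : Prop :=
  forall x y z, br (br x y) z = 0.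

(* post-Lie algebra structure on (g, n) with g = (V, gb), n = (V, nb) *)
Definition is_PA (gb nb pa : V -> V -> V) : Prop :=
  [/\ bilinear_prod pa,
      (forall x y, pa x y - pa y x = gb x y - nb x y),
      (forall x y z, pa (gb x y) z = pa x (pa y z) - pa y (pa x z)) &
      (forall x y z, pa x (nb y z) = nb (pa x y) z + nb y (pa x z))].

Definition is_CPA (nb c : V -> V -> V) : Prop :=
  [/\ bilinear_prod c,
      (forall x y, c x y = c y x),
      (forall x y z, c (nb x y) z = c x (c y z) - c y (c x z)) &
      (forall x y z, c x (nb y z) = nb (c x y) z + nb y (c x z))].

End Defs.

(* Since g is abelian, axiom (i) reads y.x = x.y + {x,y}, so the symmetrised
   product is x o y = x.y + 1/2 {x,y}.  Axiom (ii) says that left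
   multiplications commute and (iii) that they are derivations of n; together
   with {n,{n,n}} = 0 this makes o a derivation of n and makes
   x o (y o z) - y o (x o z) vanish identically.  On the other hand
   {x,y} o z = {x,y}.z, so the remaining CPA axiom holds exactly when
   {n,n}.n = 0. *)
From HB Require Import structures.
From mathcomp Require Import all_boot all_order all_algebra.
Import GRing.Theory.
Local Open Scope ring_scope.

Set Implicit Arguments.

Section Bilinear.
Variables (K : fieldType) (V : vectType K) (p : V -> V -> V).
Hypothesis p_bilin : bilinear_prod p.

Lemma bilinDl x y z : p (x + y) z = p x z + p y z.
Proof. by have := p_bilin.1 1 x y z; rewrite !scale1r. Qed.

Lemma bilinDr x y z : p x (y + z) = p x y + p x z.
Proof. by have := p_bilin.2 1 x y z; rewrite !scale1r. Qed.

Lemma bilin0l z : p 0 z = 0.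
Proof. by apply: (addrI (p 0 z)); rewrite -bilinDl !addr0. Qed.

Lemma bilin0r z : p z 0 = 0.
Proof. by apply: (addrI (p z 0)); rewrite -bilinDr !addr0. Qed.

Lemma bilinZl a x z : p (a *: x) z = a *: p x z.
Proof. by have := p_bilin.1 a x 0 z; rewrite bilin0l !addr0. Qed.

Lemma bilinZr a x z : p x (a *: z) = a *: p x z.
Proof. by have := p_bilin.2 a x z 0; rewrite bilin0r !addr0. Qed.

Lemma bilin_sym (c : K) : bilinear_prod (fun x y => c *: (p x y + p y x)).
Proof.
split=> a x y z; rewrite !(bilinDl, bilinDr, bilinZl, bilinZr) !scalerDr.
  by rewrite !scalerA mulrC addrACA.
by rewrite !scalerA mulrC addrACA.
Qed.

End Bilinear.

Lemma Lie_anticomm (K : fieldType) (V : vectType K) (br : V -> V -> V) :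
  is_Lie br -> forall x y, br y x = - br x y.
Proof.
case=> br_bilin br_alt _ x y; apply/eqP; rewrite -addr_eq0 addrC.
by have := br_alt (x + y); rewrite !(bilinDl br_bilin, bilinDr br_bilin) !br_alt add0r addr0 => ->.
Qed.

Section AbelianPostLie.
Variables (K : fieldType) (V : vectType K) (gb nb pa : V -> V -> V).
Hypotheses (two_neq0 : (2%:R : K) != 0) (nb_Lie : is_Lie nb)
  (gb_abelian : is_abelian gb) (nb_2step : is_2step_nilpotent nb)
  (pa_PA : is_PA gb nb pa).

Definition sym_prod x y := (2%:R : K)^-1 *: (pa x y + pa y x).

Let pa_bilin : bilinear_prod pa. Proof. by case: pa_PA. Qed.
Let nb_bilin : bilinear_prod nb. Proof. by case: nb_Lie. Qed.

Lemma half_double (u : V) : (2%:R : K)^-1 *: (u + u) = u.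
Proof. by rewrite -mulr2n -scaler_nat scalerA mulVf // scale1r. Qed.

Lemma nb_nb_right x y z : nb x (nb y z) = 0.
Proof. by rewrite (Lie_anticomm nb_Lie) nb_2step oppr0. Qed.

Lemma pa_swap x y : pa y x = pa x y + nb x y.
Proof.
have [_ pa_comm _ _] := pa_PA.
have := pa_comm x y; rewrite gb_abelian sub0r => pa_comm_xy.
by rewrite -[nb x y]opprK -pa_comm_xy opprB addrC subrK.
Qed.

Lemma pa_left_mul_comm x y z : pa x (pa y z) = pa y (pa x z).
Proof.
have [_ _ pa_gb _] := pa_PA.
by apply/eqP; rewrite -subr_eq0 -pa_gb gb_abelian bilin0l.
Qed.

Lemma pa_der x y z : pa x (nb y z) = nb (pa x y) z + nb y (pa x z).
Proof. by case: pa_PA. Qed.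

Lemma sym_prodE x y : sym_prod x y = pa x y + (2%:R : K)^-1 *: nb x y.
Proof. by rewrite /sym_prod (pa_swap x y) addrA scalerDr half_double. Qed.

Lemma sym_prod_bracketl x y z : sym_prod (nb x y) z = pa (nb x y) z.
Proof. by rewrite sym_prodE nb_2step scaler0 addr0. Qed.

Lemma sym_prod_der x y z :
  sym_prod x (nb y z) = nb (sym_prod x y) z + nb y (sym_prod x z).
Proof.
rewrite !sym_prodE nb_nb_right scaler0 addr0 pa_der.
rewrite (bilinDl nb_bilin) (bilinDr nb_bilin) (bilinZl nb_bilin) (bilinZr nb_bilin).
by rewrite nb_2step nb_nb_right !scaler0 !addr0.
Qed.

Lemma sym_prod_left_mul_comm x y z :
  sym_prod x (sym_prod y z) = sym_prod y (sym_prod x z).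
Proof.
have expand u v w : sym_prod u (sym_prod v w) = pa u (pa v w) +
    (2%:R : K)^-1 *: (nb (pa u v) w + nb v (pa u w) + nb u (pa v w)).
  rewrite !sym_prodE !(bilinDr pa_bilin, bilinDr nb_bilin, bilinZr pa_bilin, bilinZr nb_bilin).
  by rewrite nb_nb_right scaler0 addr0 pa_der -addrA -scalerDr.
rewrite !expand pa_left_mul_comm (pa_swap x y) (bilinDl nb_bilin) nb_2step addr0.
by rewrite addrAC.
Qed.

Lemma sym_prod_CPA : is_CPA nb sym_prod <-> forall u v w, pa (nb u v) w = 0.
Proof.
split=> [[_ _ sym_bracket _] u v w | pa_bracket].
  by rewrite -sym_prod_bracketl sym_bracket sym_prod_left_mul_comm subrr.
split=> [|x y|x y z|]; first exact: bilin_sym.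
- by rewrite /sym_prod addrC.
- by rewrite sym_prod_bracketl pa_bracket sym_prod_left_mul_comm subrr.
- exact: sym_prod_der.
Qed.

End AbelianPostLie.

Theorem corollary4p8 (K : fieldType) (V : vectType K)
  (charK0 : [pchar K] =i pred0)
  (gb nb pa : V -> V -> V)
  (Hg : is_Lie gb) (Hn : is_Lie nb)
  (Hgab : is_abelian gb) (Hn2 : is_2step_nilpotent nb)
  (Hpa : is_PA gb nb pa) :
  is_CPA nb (fun x y => (2%:R : K)^-1 *: (pa x y + pa y x)) <->
  (forall u v w : V, pa (nb u v) w = 0).
Proof.
have two_neq0 : (2%:R : K) != 0 by rewrite ((pcharf0P K).1 charK0 2).
exact: (sym_prod_CPA two_neq0 Hn Hgab Hn2 Hpa).
Qed.
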